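(* Let $\mathcal G=(V_{\min},V_{\max},E,w,\lambda)$ be a discounted payoff game, not all of whose joint strategies are co-optimal, with contraction $\lambda^*$ and gap $\gamma$, and let $0<\varepsilon\le\frac{1-\lambda^*}{3}\gamma$. Let $\mathcal G'=(V_{\min},V_{\max},E,w',\lambda)$ be obtained from $\mathcal G$ by adding to every edge weight a value drawn independently and uniformly at random from $(-\varepsilon,\varepsilon)$. Then every joint strategy that is co-optimal for $\mathcal G'$ is also co-optimal for $\mathcal G$, and $\mathcal G'$ is almost surely sharp.
   Context: A discounted payoff game is a tuple $\mathcal G=(V_{\min},V_{\max},E,w,\lambda)$ with $V=V_{\min}\cup V_{\max}$ finite (disjoint union of Min and Max vertices), $E\subseteq V\times V$ with every vertex having an outgoing edge, $w:E\to\mathbb R$, $\lambda:E\to[0,1)$. The outcome of a play $e_0e_1\ldots$ is $\sum_{i\ge0}w_{e_i}\prod_{j<i}\lambda_{e_j}$. A joint strategy is a map $\sigma:V\to V$ with $(v,\sigma(v))\in E$; $\mathrm{val}(\sigma)(v)$ is the outcome of the play from $v$ following $\sigma$; the game value $\mathrm{val}(\mathcal G)(v)$ is $\sup_{\sigma_{\max}}\inf_{\sigma_{\min}}$ of the outcome from $v$ over positional strategies; $\sigma$ is co-optimal iff $\mathrm{val}(\sigma)=\mathrm{val}(\mathcal G)$. $\mathsf{offset}(x,(v,v'))=x(v)-(w_{(v,v')}+\lambda_{(v,v')}x(v'))$ if $v\in V_{\max}$, and $(w_{(v,v')}+\lambda_{(v,v')}x(v'))-x(v)$ otherwise. Contraction: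 $\lambda^*=\max_e\lambda_e$. For non-co-optimal $\sigma$, $\gamma_\sigma=-\min\{\mathsf{offset}(\mathrm{val}(\sigma),e)\mid e\in E\}$; the gap $\gamma$ is the minimum of $\gamma_\sigma$ over all non-co-optimal joint strategies. $H$ is the system of inequations over $x\in\mathbb R^V$ containing, for each edge $e=(v,v')$, $x(v)\ge w_e+\lambda_e x(v')$ if $v\in V_{\max}$ and $\le$ if $v\in V_{\min}$. A basis of $H$ is a set of $|V|$ inequations whose equality versions have a unique common solution; if it satisfies $H$ it is the basis valuation. The game is sharp if every basis valuation satisfies exactly $|V|$ inequations of $H$ with equality. *)

From HB Require Import structures.
From mathcomp Require Import all_boot all_order all_algebra.
From mathcomp Require Import all_classical all_reals all_analysis.
Set Implicit Arguments. Unset Strict Implicit. Unset Printing Implicit Defensive.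
Import Order.TTheory GRing.Theory Num.Theory numFieldNormedType.Exports.
Local Open Scope classical_set_scope.
Local Open Scope ring_scope.

(* A discounted payoff game is given by a finite vertex type V, the set of
   Max vertices Vmax (Min vertices are the complement ~: Vmax), an edge set
   E : {set V * V}, weights w and discounts lam (only their values on E matter). *)

Definition valid_game {R : realType} {V : finType} (E : {set V * V})
  (lam : V * V -> R) : Prop :=
  (forall v, exists v', (v, v') \in E) /\
  (forall e, e \in E -> 0 <= lam e /\ lam e < 1).

Definition joint_strategy {V : finType} (E : {set V * V}) (s : V -> V) : Prop :=
  forall v, (v, s v) \in E.

Definition play {V : finType} (s : V -> V) (v : V) (i : nat) : V := iter i s v.

Definition outcome_term {R : realType} {V : finType} (w lam : V * V -> R)
  (s : V -> V) (v : V) (i : nat) : R :=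
  w (play s v i, play s v i.+1) *
  \prod_(j < i) lam (play s v j, play s v j.+1).

Definition val_strat {R : realType} {V : finType} (w lam : V * V -> R)
  (s : V -> V) (v : V) : R :=
  limn (series (outcome_term w lam s v)).

Definition mix {V : finType} (Vmax : {set V}) (s t : V -> V) (v : V) : V :=
  if v \in Vmax then s v else t v.

(* game value: sup over Max positional strategies of inf over Min positional
   strategies (positional strategies of a player = restrictions of joint ones) *)
Definition val_game {R : realType} {V : finType} (Vmax : {set V})
  (E : {set V * V}) (w lam : V * V -> R) (v : V) : R :=
  sup [set inf [set val_strat w lam (mix Vmax s t) v | t in joint_strategy E]
       | s in joint_strategy E].

Definition co_optimal {R : realType} {V : finType} (Vmax : {set V})
  (E : {set V * V}) (w lam : V * V -> R) (s : V -> V) : Prop :=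
  joint_strategy E s /\
  forall v, val_strat w lam s v = val_game Vmax E w lam v.

Definition offset {R : realType} {V : finType} (Vmax : {set V})
  (w lam : V * V -> R) (x : V -> R) (e : V * V) : R :=
  if e.1 \in Vmax then x e.1 - (w e + lam e * x e.2)
  else (w e + lam e * x e.2) - x e.1.

Definition lambda_star {R : realType} {V : finType} (E : {set V * V})
  (lam : V * V -> R) : R :=
  sup [set lam e | e in [set e | e \in E]].

Definition gamma_strat {R : realType} {V : finType} (Vmax : {set V})
  (E : {set V * V}) (w lam : V * V -> R) (s : V -> V) : R :=
  - inf [set offset Vmax w lam (val_strat w lam s) e | e in [set e | e \in E]].

Definition gap {R : realType} {V : finType} (Vmax : {set V})
  (E : {set V * V}) (w lam : V * V -> R) : R :=
  inf [set gamma_strat Vmax E w lam s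
       | s in [set s | joint_strategy E s /\ ~ co_optimal Vmax E w lam s]].

Definition satisfies_H {R : realType} {V : finType} (Vmax : {set V})
  (E : {set V * V}) (w lam : V * V -> R) (x : V -> R) : Prop :=
  forall e, e \in E ->
    if e.1 \in Vmax then w e + lam e * x e.2 <= x e.1
    else x e.1 <= w e + lam e * x e.2.

Definition solves_eqs {R : realType} {V : finType}
  (w lam : V * V -> R) (B : {set V * V}) (x : V -> R) : Prop :=
  forall e, e \in B -> x e.1 = w e + lam e * x e.2.

Definition is_basis {R : realType} {V : finType} (E : {set V * V})
  (w lam : V * V -> R) (B : {set V * V}) : Prop :=
  B \subset E /\ #|B| = #|V| /\
  (exists x, solves_eqs w lam B x) /\
  (forall x y, solves_eqs w lam B x -> solves_eqs w lam B y -> x =1 y).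

Definition basis_valuation {R : realType} {V : finType} (Vmax : {set V})
  (E : {set V * V}) (w lam : V * V -> R) (x : V -> R) : Prop :=
  exists B, is_basis E w lam B /\ solves_eqs w lam B x /\
            satisfies_H Vmax E w lam x.

Definition sharp {R : realType} {V : finType} (Vmax : {set V})
  (E : {set V * V}) (w lam : V * V -> R) : Prop :=
  forall x, basis_valuation Vmax E w lam x ->
    #|[set e in E | x e.1 == w e + lam e * x e.2]| = #|V|.

Definition uniform_sym {R : realType} {d : measure_display}
  {Omega : measurableType d} (P : probability Omega R) (X : Omega -> R)
  (a : R) : Prop :=
  let I : set R := [set x | - a < x < a] in
  forall B : set R, measurable B ->
    P (X @^-1` B) =
    (lebesgue_measure (B `&` I) * ((2 * a)^-1)%:E)%E.

Definition mutually_independent {R : realType} {d : measure_display}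
  {Omega : measurableType d} (P : probability Omega R) {I : finType}
  (A : {set I}) (X : I -> Omega -> R) : Prop :=
  forall B : I -> set R, (forall i, measurable (B i)) ->
    P (\bigcap_(i in [set i | i \in A]) (X i @^-1` B i)) =
    (\prod_(i in A) P (X i @^-1` B i))%E.

From HB Require Import structures.
From mathcomp Require Import all_boot all_order all_algebra.
From mathcomp Require Import all_classical all_reals all_analysis.
From mathcomp Require Import ring lra.
Set Implicit Arguments. Unset Strict Implicit. Unset Printing Implicit Defensive.
Import Order.TTheory GRing.Theory Num.Theory numFieldNormedType.Exports.
Local Open Scope classical_set_scope.
Local Open Scope ring_scope.

(* By contraction, changing every weight by less than [eps] moves the valuation of
   a fixed joint strategy by at most [eps / (1 - lambda_star)], hence each of its
   offsets by at most [2 eps / (1 - lambda_star) < gap].  A strategy that is not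
   co-optimal has an edge of offset at most [- gap]; a co-optimal one has nonnegative
   offsets, because the game value is realised by positional strategies and
   satisfies [H].  So no strategy becomes co-optimal under the perturbation.

   If a basis valuation is tight at an edge [e] outside its basis [B], the equation
   of [e] is a linear combination of those of [B], so [X e] is an affine function of
   the [X b], [b \in B].  Independence and uniformity bound the probability of this
   hyperplane by [C / m.+1] for every grid resolution [m], so it is null, and there
   are finitely many pairs [(B, e)]. *)

Lemma sup_eq_max (R : realType) (A : set R) a : A a -> ubound A a -> sup A = a.
Proof.
move=> Aa ubA; apply/le_anti/andP; split; first by apply: ge_sup => //; exists a.
by apply: ub_le_sup => //; exists a.
Qed.

Lemma inf_eq_min (R : realType) (A : set R) a : A a -> lbound A a -> inf A = a.
Proof.
move=> Aa lbA; apply/le_anti/andP; split; first by apply: ge_inf => //; exists a.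
by apply: lb_le_inf => //; exists a.
Qed.

Lemma ler_sum_lt (R : numDomainType) (I : finType) (F G : I -> R) i :
  (forall j, F j <= G j) -> F i < G i -> \sum_j F j < \sum_j G j.
Proof.
move=> FG FGi; rewrite (bigD1 i) //= [ltRHS](bigD1 i) //=.
by apply: ltr_leD => //; apply: ler_sum => j _.
Qed.

Lemma le0_of_le_div_succ (R : archiRealFieldType) (z C : R) :
  (forall m : nat, z <= C / m.+1%:R) -> z <= 0.
Proof.
move=> zC; rewrite leNgt; apply/negP => z0.
have := zC (Num.truncn (C / z)); have := truncnS_gt (C / z).
by rewrite ltr_pdivrMr // ler_pdivlMr // mulrC => /lt_le_trans /[apply]; rewrite ltxx.
Qed.

Section Discounted.
Variables (R : realType) (V : finType).
Implicit Types (w lam : V * V -> R) (s : V -> V).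

Lemma playSr s v i : play s v i.+1 = play s (s v) i.
Proof. by rewrite /play iterSr. Qed.

Lemma play_step s v i : s (play s v i) = play s (s v) i.
Proof. by rewrite -playSr /play iterS. Qed.

Lemma outcome_term0 w lam s v : outcome_term w lam s v 0 = w (v, s v).
Proof. by rewrite /outcome_term big_ord0 mulr1. Qed.

Lemma outcome_termS w lam s v i :
  outcome_term w lam s v i.+1 = lam (v, s v) * outcome_term w lam s (s v) i.
Proof.
rewrite /outcome_term big_ord_recl (playSr s v i) (playSr s v i.+1) mulrCA.
by congr (_ * (_ * _)); apply: eq_bigr => j _; rewrite /bump /= add0n !play_step.
Qed.

Lemma is_cvg_outcome_series w lam s L :
  (forall u, 0 <= lam (u, s u) <= L) -> L < 1 ->
  forall v, cvgn (series (outcome_term w lam s v)).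
Proof.
move=> lamL L1 v; apply: normed_cvg.
have L0 : 0 <= L by case/andP: (lamL v) => /le_trans; apply.
set M := \sum_u `|w (u, s u)|.
apply: (@series_le_cvg _ _ (geometric M L)).
- by move=> n /=.
- by move=> n; rewrite /geometric /= mulr_ge0 ?sumr_ge0 ?exprn_ge0.
- move=> n /=; rewrite /outcome_term normrM /geometric /=.
  apply: ler_pM => //; first by rewrite /M (bigD1 (play s v n)) //= lerDl sumr_ge0.
  rewrite -[n in L ^+ n](card_ord n) -prodr_const normr_prod; apply: ler_prod => j _.
  by case/andP: (lamL (play s v j)) => lam0 lamLj; rewrite normr_ge0 ger0_norm.
- by apply: is_cvg_geometric_series; rewrite ger0_norm.
Qed.

Lemma val_stratE w lam s L :
  (forall u, 0 <= lam (u, s u) <= L) -> L < 1 ->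
  forall v, val_strat w lam s v = w (v, s v) + lam (v, s v) * val_strat w lam s (s v).
Proof.
move=> lamL L1 v; apply: cvg_lim => //; rewrite -cvg_shiftS /=.
have -> : (fun n => series (outcome_term w lam s v) n.+1) =
    (fun n => w (v, s v) + lam (v, s v) * series (outcome_term w lam s (s v)) n).
  apply: funext => n; rewrite /series /= big_nat_recl // outcome_term0 mulr_sumr.
  by congr (_ + _); apply: eq_bigr => i _; rewrite outcome_termS.
apply: cvgD; first exact: cvg_cst.
by apply: cvgMl_tmp; apply: is_cvg_outcome_series lamL L1 (s v).
Qed.

(* At a maximiser [m] of [d] with [d m > 0] the hypothesis gives [d m <= c + L * d m]. *)
Lemma contraction_bound (d : V -> R) (next : V -> V) (l : V -> R) (c L : R) :
  (forall u, 0 <= l u <= L) -> L < 1 -> 0 <= c ->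
  (forall u, d u <= c + l u * d (next u)) -> forall u, (1 - L) * d u <= c.
Proof.
move=> lL L1 c0 dle u.
have [m _ maxm] := @arg_maxP _ _ V u predT d erefl.
have {}maxm j : d j <= d m by exact: maxm.
have L1' : 0 <= 1 - L by rewrite subr_ge0 ltW.
apply: le_trans (_ : (1 - L) * d m <= c); first by rewrite ler_wpM2l.
have [dm0|dm0] := lerP (d m) 0; first by apply: le_trans c0; rewrite mulr_ge0_le0.
have /andP[lm0 lmL] := lL m.
have : l m * d (next m) <= L * d m.
  by rewrite (le_trans (ler_wpM2l lm0 (maxm _))) // ler_wpM2r // ltW.
by have := dle m; rewrite mulrBl mul1r; lra.
Qed.

End Discounted.

Section GameValue.
Variables (R : realType) (V : finType) (Vmax : {set V}) (E : {set V * V})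
  (w lam : V * V -> R) (L : R).
Hypothesis E_total : forall v, exists v', (v, v') \in E.
Hypothesis lamL : forall e, e \in E -> 0 <= lam e <= L.
Hypothesis L1 : L < 1.

Local Notation joint := (joint_strategy E).
Local Notation val := (val_strat w lam).
Implicit Type y : V -> R.

Lemma val_bellman (s : V -> V) : joint s ->
  forall v, val s v = w (v, s v) + lam (v, s v) * val s (s v).
Proof. by move=> js; apply: (val_stratE w (L := L)) => // u; apply: lamL. Qed.

Lemma val_le_super (m : V -> V) y : joint m ->
  (forall x, w (x, m x) + lam (x, m x) * y (m x) <= y x) -> forall x, val m x <= y x.
Proof.
move=> jm super x; rewrite -subr_le0.
have L1' : 0 < 1 - L by rewrite subr_gt0.
rewrite -(pmulr_rle0 _ L1'); move: x.
apply: (contraction_bound (next := m) (l := fun u => lam (u, m u))) => //.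
- by move=> u; apply/lamL/jm.
- move=> u; rewrite add0r (val_bellman jm u); have := super u.
  by have /andP[lam0 _] := lamL (jm u); nra.
Qed.

Lemma val_ge_sub (m : V -> V) y : joint m ->
  (forall x, y x <= w (x, m x) + lam (x, m x) * y (m x)) -> forall x, y x <= val m x.
Proof.
move=> jm sub x; rewrite -subr_le0.
have L1' : 0 < 1 - L by rewrite subr_gt0.
rewrite -(pmulr_rle0 _ L1'); move: x.
apply: (contraction_bound (next := m) (l := fun u => lam (u, m u))) => //.
- by move=> u; apply/lamL/jm.
- move=> u; rewrite add0r (val_bellman jm u); have := sub u.
  by have /andP[lam0 _] := lamL (jm u); nra.
Qed.

Lemma sum_val_lt_super (m : V -> V) y u : joint m ->
  (forall x, w (x, m x) + lam (x, m x) * y (m x) <= y x) ->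
  w (u, m u) + lam (u, m u) * y (m u) < y u -> \sum_x val m x < \sum_x y x.
Proof.
move=> jm super superu; apply: (ler_sum_lt (i := u)); first exact: val_le_super.
rewrite (val_bellman jm u); apply: le_lt_trans superu.
by have /andP[lam0 _] := lamL (jm u); rewrite lerD2l ler_wpM2l ?val_le_super.
Qed.

Lemma sum_val_gt_sub (m : V -> V) y u : joint m ->
  (forall x, y x <= w (x, m x) + lam (x, m x) * y (m x)) ->
  y u < w (u, m u) + lam (u, m u) * y (m u) -> \sum_x y x < \sum_x val m x.
Proof.
move=> jm sub subu; apply: (ler_sum_lt (i := u)); first exact: val_ge_sub.
rewrite (val_bellman jm u); apply: lt_le_trans subu _.
by have /andP[lam0 _] := lamL (jm u); rewrite lerD2l ler_wpM2l ?val_ge_sub.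
Qed.

Lemma joint_mix (s t : V -> V) : joint s -> joint t -> joint (mix Vmax s t).
Proof. by move=> js jt v; rewrite /mix; case: ifP. Qed.

Definition jointb (t : {ffun V -> V}) : bool := [forall v, (v, t v) \in E].

Lemma jointbP (t : {ffun V -> V}) : reflect (joint t) (jointb t).
Proof. exact: (iffP forallP). Qed.

Definition some_joint : {ffun V -> V} := [ffun v => xchoose (E_total v)].

Lemma jointb_some_joint : jointb some_joint.
Proof. by apply/jointbP => v; rewrite ffunE; exact: (xchooseP (E_total v)). Qed.

Definition redirect (t : {ffun V -> V}) u u' : {ffun V -> V} :=
  [ffun x => if x == u then u' else t x].

Lemma jointb_redirect (t : {ffun V -> V}) (u u' : V) :
  jointb t -> (u, u') \in E -> jointb (redirect t u u').
Proof.
by move=> /jointbP jt uu'; apply/jointbP => x; rewrite ffunE; case: eqP => [->|].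
Qed.

(* A best response of Min to [s] minimises the total value over all vertices;
   it is then optimal at every vertex simultaneously. *)
Definition best_response (s : V -> V) : {ffun V -> V} :=
  [arg min_(t < some_joint | jointb t) \sum_v val (mix Vmax s t) v]%O.

Lemma best_response_spec (s : V -> V) : jointb (best_response s) /\
  forall t, jointb t ->
    \sum_v val (mix Vmax s (best_response s)) v <= \sum_v val (mix Vmax s t) v.
Proof. by rewrite /best_response; case: arg_minP; first exact: jointb_some_joint. Qed.

Lemma best_response_min_ineq (s : V -> V) u u' :
  joint s -> u \notin Vmax -> (u, u') \in E ->
  val (mix Vmax s (best_response s)) u <=
  w (u, u') + lam (u, u') * val (mix Vmax s (best_response s)) u'.
Proof.
move=> js uNmax uu'; set z := val _; rewrite leNgt; apply/negP => improving.
have [jb minb] := best_response_spec s.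
have jt : jointb (redirect (best_response s) u u') by exact: jointb_redirect.
set m := mix Vmax s (redirect (best_response s) u u').
have jm : joint m by apply/joint_mix/jointbP.
have jz : joint (mix Vmax s (best_response s)) by apply/joint_mix/jointbP.
have mu : m u = u' by rewrite /m /mix ffunE (negbTE uNmax) eqxx.
have super x : w (x, m x) + lam (x, m x) * z (m x) <= z x.
  case: (eqVneq x u) => [->|xu]; first by rewrite mu ltW.
  by rewrite /z (val_bellman jz x) /m /mix ffunE (negbTE xu).
have := sum_val_lt_super jm super (u := u); rewrite mu => /(_ improving).
by rewrite ltNge => /negP; apply; exact: minb.
Qed.

Lemma best_response_le (s t : V -> V) : joint s -> joint t ->
  forall x, val (mix Vmax s (best_response s)) x <= val (mix Vmax s t) x.
Proof.
move=> js jt; have [/jointbP jb _] := best_response_spec s.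
have jz : joint (mix Vmax s (best_response s)) by exact: joint_mix.
apply: val_ge_sub; first exact: joint_mix.
move=> x; set z := val _; rewrite /mix; case: ifP => xmax.
  by rewrite /z (val_bellman jz x) /mix xmax.
by apply: best_response_min_ineq => //; rewrite xmax.
Qed.

Definition max_optimal : {ffun V -> V} :=
  [arg max_(s > some_joint | jointb s) \sum_v val (mix Vmax s (best_response s)) v]%O.

Definition game_valuation := val (mix Vmax max_optimal (best_response max_optimal)).

Lemma max_optimal_spec : jointb max_optimal /\
  forall s, jointb s ->
    \sum_v val (mix Vmax s (best_response s)) v <= \sum_v game_valuation v.
Proof.
by rewrite /game_valuation /max_optimal; case: arg_maxP; first exact: jointb_some_joint.
Qed.

Lemma game_valuation_max_ineq u u' : u \in Vmax -> (u, u') \in E ->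
  w (u, u') + lam (u, u') * game_valuation u' <= game_valuation u.
Proof.
move=> umax uu'; rewrite leNgt; apply/negP => improving.
have [/jointbP jopt maxopt] := max_optimal_spec.
have [/jointbP jb _] := best_response_spec max_optimal.
have js : jointb (redirect max_optimal u u').
  by apply: jointb_redirect => //; apply/jointbP.
set s := redirect max_optimal u u'.
have [/jointbP jbs _] := best_response_spec s.
set m := mix Vmax s (best_response s).
have jm : joint m by apply/joint_mix/jbs/jointbP.
have jz : joint (mix Vmax max_optimal (best_response max_optimal)) by exact: joint_mix.
have mu : m u = u' by rewrite /m /mix ffunE umax eqxx.
have sub x : game_valuation x <= w (x, m x) + lam (x, m x) * game_valuation (m x).
  rewrite /m /mix ffunE; case: ifP => xmax; last first.
    by apply: best_response_min_ineq; [exact: jopt | rewrite xmax | exact: jbs].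
  case: (eqVneq x u) => [->|xu]; first exact: ltW.
  by rewrite /game_valuation (val_bellman jz x) /mix xmax.
have := sum_val_gt_sub jm sub (u := u); rewrite mu => /(_ improving).
by rewrite ltNge => /negP; apply; exact: maxopt.
Qed.

Lemma game_valuation_min_ineq u u' : u \notin Vmax -> (u, u') \in E ->
  game_valuation u <= w (u, u') + lam (u, u') * game_valuation u'.
Proof. by have [/jointbP jopt _] := max_optimal_spec; apply: best_response_min_ineq. Qed.

Lemma satisfies_H_game_valuation : satisfies_H Vmax E w lam game_valuation.
Proof.
move=> [u u'] uu' /=; case: ifP => umax.
  exact: game_valuation_max_ineq.
by apply: game_valuation_min_ineq => //; rewrite umax.
Qed.

Lemma val_gameE v : val_game Vmax E w lam v = game_valuation v.
Proof.
have [/jointbP jopt _] := max_optimal_spec.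
have [/jointbP jb _] := best_response_spec max_optimal.
have inf_response s : joint s ->
    inf [set val (mix Vmax s t) v | t in joint] = val (mix Vmax s (best_response s)) v.
  move=> js; have [/jointbP jbs _] := best_response_spec s.
  apply: inf_eq_min; first by exists (best_response s : V -> V).
  by move=> _ [t jt <-]; exact: best_response_le.
apply: sup_eq_max; first by exists (max_optimal : V -> V); last rewrite inf_response.
move=> _ [s js <-]; rewrite (inf_response _ js).
apply: le_trans (best_response_le js jb v) _.
have jz : joint (mix Vmax max_optimal (best_response max_optimal)) by exact: joint_mix.
apply: (val_le_super (y := game_valuation)); first exact: joint_mix.
move=> x; rewrite /mix; case: ifP => xmax; first exact: game_valuation_max_ineq.
by rewrite /game_valuation (val_bellman jz x) /mix xmax.
Qed.

Lemma co_optimal_offset_ge0 (s : V -> V) : co_optimal Vmax E w lam s ->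
  forall e, e \in E -> 0 <= offset Vmax w lam (val s) e.
Proof.
move=> [_ coopt] e eE; have := satisfies_H_game_valuation eE.
by rewrite /offset !coopt !val_gameE; case: ifP; rewrite subr_ge0.
Qed.

End GameValue.

Lemma dist_offset_le (R : realType) (V : finType) (Vmax : {set V})
    (w w' lam : V * V -> R) (x x' : V -> R) (e : V * V) : 0 <= lam e ->
  `|offset Vmax w' lam x' e - offset Vmax w lam x e| <=
    `|x' e.1 - x e.1| + `|w' e - w e| + lam e * `|x' e.2 - x e.2|.
Proof.
move=> lam0; rewrite -[lam e]ger0_norm // -normrM.
set a := x' e.1 - x e.1; set b := w' e - w e; set c := lam e * (x' e.2 - x e.2).
have split_dist : `|a - b - c| <= `|a| + `|b| + `|c|.
  by apply: le_trans (ler_normB _ _) _; rewrite lerD2r ler_normB.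
rewrite /offset; case: ifP => _.
  by have -> : x' e.1 - (w' e + lam e * x' e.2) - (x e.1 - (w e + lam e * x e.2)) =
    a - b - c by rewrite /a /b /c; ring.
have -> : w' e + lam e * x' e.2 - x' e.1 - (w e + lam e * x e.2 - x e.1) =
  - (a - b - c) by rewrite /a /b /c; ring.
by rewrite normrN.
Qed.

Section Perturbation.
Variables (R : realType) (V : finType) (Vmax : {set V}) (E : {set V * V})
  (lam : V * V -> R) (L : R).
Hypothesis lamL : forall e, e \in E -> 0 <= lam e <= L.
Hypothesis L1 : L < 1.

Local Notation joint := (joint_strategy E).

Lemma val_strat_perturb (w w' : V * V -> R) (s : V -> V) (eps : R) : joint s ->
  (forall u, `|w' (u, s u) - w (u, s u)| <= eps) ->
  forall x, (1 - L) * `|val_strat w' lam s x - val_strat w lam s x| <= eps.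
Proof.
move=> js dw x; have eps0 : 0 <= eps := le_trans (normr_ge0 _) (dw x).
move: x; apply: (contraction_bound (next := s) (l := fun u => lam (u, s u))) => //.
  by move=> u; apply/lamL/js.
move=> u; rewrite (val_bellman w' lamL L1 js) (val_bellman w lamL L1 js).
have /andP[lam0 _] := lamL (js u).
set dv := val_strat w' lam s (s u) - val_strat w lam s (s u).
have -> : w' (u, s u) + lam (u, s u) * val_strat w' lam s (s u) -
    (w (u, s u) + lam (u, s u) * val_strat w lam s (s u)) =
    w' (u, s u) - w (u, s u) + lam (u, s u) * dv by rewrite /dv; ring.
apply: le_trans (ler_normD _ _) _; apply: lerD; first exact: dw.
by rewrite normrM ger0_norm.
Qed.

Lemma gamma_strat_attained (w : V * V -> R) (t : V -> V) (v0 : V) : joint t ->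
  let offs := offset Vmax w lam (val_strat w lam t) in
  exists2 e0, e0 \in E &
    gamma_strat Vmax E w lam t = - offs e0 /\ forall e, e \in E -> offs e0 <= offs e.
Proof.
move=> jt offs.
have [m mE minm] := @arg_minP _ _ _ (v0, t v0) (fun e => e \in E) offs (jt v0).
have {}minm e : e \in E -> offs m <= offs e by exact: minm.
exists m => //; split => //; congr (- _); apply: inf_eq_min; first by exists m.
by move=> _ [e eE <-]; exact: minm.
Qed.

Lemma gamma_strat_ge0 (w : V * V -> R) (t : V -> V) (v0 : V) : joint t ->
  0 <= gamma_strat Vmax E w lam t.
Proof.
move=> jt; have [e0 _ [-> minoffs]] := gamma_strat_attained w v0 jt.
rewrite oppr_ge0; apply: le_trans (minoffs _ (jt v0)) _.
by rewrite /offset /= (val_bellman w lamL L1 jt v0); case: ifP; rewrite subrr.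
Qed.

Lemma gap_le_gamma_strat (w : V * V -> R) (s : V -> V) (v0 : V) :
  joint s -> ~ co_optimal Vmax E w lam s -> gap Vmax E w lam <= gamma_strat Vmax E w lam s.
Proof.
move=> js ncs; apply: ge_inf; last by exists s.
by exists 0 => _ [t [jt _] <-]; exact: gamma_strat_ge0.
Qed.

(* At an edge [e0] realising [gamma_strat w s] the offset for [w] is at most [- gap],
   while the offset for [w + delta] is nonnegative; by [val_strat_perturb] the two
   offsets differ by at most [2 eps / (1 - L)]. *)
Theorem co_optimal_perturbed (w delta : V * V -> R) (eps : R) :
  (forall v, exists v', (v, v') \in E) -> 0 < eps ->
  eps <= (1 - L) / 3 * gap Vmax E w lam ->
  (forall e, e \in E -> `|delta e| < eps) ->
  forall s, co_optimal Vmax E (fun e => w e + delta e) lam s -> co_optimal Vmax E w lam s.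
Proof.
move=> E_total eps0 eps_gap small_delta s cs'; apply: contrapT => ncs.
have js : joint s by case: cs'.
have [v0 _|V0] := pickP (@predT V); last by apply: ncs; split => // v; have := V0 v.
set w' := fun e => w e + delta e in cs'.
set y := val_strat w lam s; set y' := val_strat w' lam s.
have [e0 e0E [gammaE _]] := gamma_strat_attained w v0 js.
have gap_gamma := gap_le_gamma_strat v0 js ncs.
have offs'0 := co_optimal_offset_ge0 E_total lamL L1 cs' e0E.
have /andP[lam0 lamLe] := lamL e0E.
have := dist_offset_le Vmax w w' y y' lam0.
have dw u : `|w' (u, s u) - w (u, s u)| <= eps.
  by rewrite /w' addrC addKr ltW ?small_delta.
have dy := val_strat_perturb js dw.
rewrite /w' (addrC (w e0)) addrK gammaE in gap_gamma *.
move: offs'0 (dy e0.1) (dy e0.2) (small_delta _ e0E) gap_gamma eps_gap.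
rewrite -/w' -/y -/y'.
set o := offset _ w _ _ _; set o' := offset _ w' _ _ _.
set A := `|y' e0.1 - y e0.1|; set B := `|y' e0.2 - y e0.2|; set d := `|delta e0|.
set G := gap Vmax E w lam; move=> o'0 dA dB dd oG epsG dist.
have L1' : 0 < 1 - L by rewrite subr_gt0.
have hB : lam e0 * ((1 - L) * B) <= L * eps.
  by apply: ler_pM => //; apply: mulr_ge0; [exact: ltW | exact: normr_ge0].
have : - o <= A + d + lam e0 * B.
  by apply: le_trans dist; rewrite (le_trans _ (ler_norm _)) // lerDr.
move: oG => /(ler_wpM2l (ltW L1')) oG /(ler_wpM2l (ltW L1')).
nra.
Qed.

End Perturbation.

Section LinearForms.
Variables (F : fieldType) (V I : finType).

Lemma sum_enum_val (G : V -> F) : \sum_(j < #|V|) G (enum_val j) = \sum_v G v.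
Proof. by rewrite -(big_enum_val (A := predT)). Qed.

(* The matrix of the forms [a i], [i \in B], has full column rank. *)
Lemma linear_form_span (B : {set I}) (a : I -> V -> F) (f : V -> F) :
  (forall x : V -> F, (forall i, i \in B -> \sum_v a i v * x v = 0) -> forall v, x v = 0) ->
  exists c : I -> F, forall x, \sum_v f v * x v = \sum_(i in B) c i * \sum_v a i v * x v.
Proof.
move=> ker0.
pose A : 'M[F]_(#|B|, #|V|) := \matrix_(i, j) a (enum_val i) (enum_val j).
pose col_of (x : V -> F) : 'cV[F]_#|V| := \col_j x (enum_val j).
have A_col x i : (A *m col_of x) i 0 = \sum_v a (enum_val i) v * x v.
  by rewrite !mxE -sum_enum_val; apply: eq_bigr => j _; rewrite !mxE.
have kerAt : kermx A^T = 0.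
  apply/row_matrixP => r; rewrite row0; set z := row r (kermx A^T).
  have zA : A *m z^T = 0 by rewrite -[A]trmxK -trmx_mul -row_mul mulmx_ker row0 trmx0.
  have zx : z^T = col_of (fun v => z 0 (enum_rank v)).
    by apply/matrixP => p q; rewrite !mxE enum_valK; case: q => -[].
  have z0 : forall v, z 0 (enum_rank v) = 0.
    apply: ker0 => i iB.
    by rewrite -(enum_rankK_in iB iB) -A_col -zx zA mxE.
  by apply/rowP => j; have := z0 (enum_val j); rewrite enum_valK !mxE.
have /submxP [D fD] : (\row_j f (enum_val j) <= A)%MS.
  apply: submx_full.
  by rewrite /row_full -mxrank_tr -[_ == _]/(row_free A^T) -kermx_eq0 kerAt.
exists (fun b => \sum_(i < #|B|) (enum_val i == b)%:R * D 0 i) => x.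
have := congr1 (fun M : 'M[F]_(1, #|V|) => (M *m col_of x) 0 0) fD.
rewrite -mulmxA mxE [in RHS]mxE -sum_enum_val.
under eq_bigr do rewrite !mxE.
move=> ->; under [RHS]eq_bigr do rewrite mulr_suml.
rewrite exchange_big /=; apply: eq_bigr => i _.
rewrite A_col [RHS](bigD1 (enum_val i)) ?enum_valP //= eqxx mul1r.
rewrite [X in _ + X]big1 ?addr0 // => b /andP[_].
by rewrite eq_sym => /negbTE ->; rewrite !mul0r.
Qed.

End LinearForms.

Lemma measure_bigsetU_le d (T : measurableType d) (R : realType)
    (mu : {measure set T -> \bar R}) (I : finType) (Q : pred I) (F : I -> set T) :
  (forall i, measurable (F i)) ->
  (mu (\big[setU/set0]_(i | Q i) F i) <= \sum_(i | Q i) mu (F i))%E.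
Proof.
move=> mF; suff [] : measurable (\big[setU/set0]_(i | Q i) F i) /\
    (mu (\big[setU/set0]_(i | Q i) F i) <= \sum_(i | Q i) mu (F i))%E by [].
apply: (big_ind2 (fun A r => measurable A /\ (mu A <= r)%E)) => //.
- by rewrite measure0.
- move=> A r A' r' [mA muA] [mA' muA']; split; first exact: measurableU.
  exact: le_trans (measureU2 mu mA mA') (leeD muA muA').
Qed.

Lemma set_sym_itvE (R : realType) (a : R) :
  [set x | - a < x < a] = [set` `]- a, a[] :> set R.
Proof. by apply/seteqP; split => x /=; rewrite in_itv. Qed.

Lemma measurable_sym_itv (R : realType) (a : R) : measurable [set x : R | - a < x < a].
Proof. by rewrite set_sym_itvE; exact: measurable_itv. Qed.

Section UniformSym.
Context (R : realType) d (Omega : measurableType d) (P : probability Omega R).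
Variables (eps : R) (Y : Omega -> R).
Hypothesis eps0 : 0 < eps.
Hypothesis Y_unif : uniform_sym P Y eps.

Lemma uniform_sym_itv_le a b : a <= b ->
  (P (Y @^-1` [set` `[a, b]]) <= ((b - a) / (2 * eps))%:E)%E.
Proof.
move=> ab; rewrite Y_unif; last exact: measurable_itv.
apply: le_trans (_ : lebesgue_measure [set` `[a, b]] * ((2 * eps)^-1)%:E <= _)%E.
  apply: lee_wpmul2r; first by rewrite lee_fin invr_ge0 mulr_ge0 // ltW.
  apply: le_measure; rewrite ?inE; [|exact: measurable_itv|by move=> x []].
  by apply: measurableI; [exact: measurable_itv | exact: measurable_sym_itv].
rewrite lebesgue_measure_itv /= lte_fin; case: ifP => _; first by rewrite -EFinM.
by rewrite mul0e lee_fin divr_ge0 ?subr_ge0 // mulr_ge0 // ltW.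
Qed.

Lemma uniform_sym_out : P (Y @^-1` ~` [set x | - eps < x < eps]) = 0%E.
Proof.
rewrite Y_unif ?setICl ?measure0 ?mul0e //.
by apply: measurableC; exact: measurable_sym_itv.
Qed.

End UniformSym.

Section Hyperplane.
Context (R : realType) d (Omega : measurableType d) (P : probability Omega R)
  (I : finType) (E : {set I}) (X : I -> Omega -> R) (eps : R).
Hypothesis eps0 : 0 < eps.
Hypothesis mX : forall i, measurable_fun setT (X i).
Hypothesis X_indep : mutually_independent P E X.
Hypothesis X_unif : forall i, i \in E -> uniform_sym P (X i) eps.
Variables (B : {set I}) (e : I) (c : I -> R) (k : R).
Hypotheses (BE : B \subset E) (eE : e \in E) (eNB : e \notin B).

Let measurable_preimage i (A : set R) : measurable A -> measurable (X i @^-1` A).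
Proof. by move=> mA; rewrite -(setTI (_ @^-1` _)); apply: mX. Qed.

Let K := \sum_(b in B) `|c b|.
Let K_ge0 : 0 <= K. Proof. exact: sumr_ge0. Qed.

Let fineK_P (A : set Omega) : measurable A -> P A = (fine (P A))%:E.
Proof. by move=> mA; rewrite fineK // fin_num_measure. Qed.

(* The cube [(-eps, eps)^B] is cut into [m.+1^#|B|] cells of side [mesh]; on the
   cell indexed by [p], [X e] is confined to an interval of length [2 K mesh], so by
   independence each cell has probability at most [2 K / m.+1] times [m.+1^-#|B|]. *)
Section Grid.
Variable m : nat.

Let mesh := 2 * eps / m.+1%:R.
Let mesh_gt0 : 0 < mesh. Proof. by rewrite divr_gt0 // mulr_gt0. Qed.
Let node (l : nat) := - eps + l%:R * mesh.
Let center (p : {ffun I -> 'I_m.+1}) := \sum_(b in B) c b * node (p b) + k.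

Let window p j : set R :=
  if j == e then [set` `[center p - K * mesh, center p + K * mesh]]
  else if j \in B then [set` `[node (p j), node (p j) + mesh]] else setT.

Let cell p := \bigcap_(j in [set j | j \in E]) (X j @^-1` window p j).

Let measurable_window p j : measurable (window p j).
Proof.
by rewrite /window; case: ifP => _; [|case: ifP => _]; rewrite ?measurable_itv.
Qed.

Let measurable_cell p : measurable (cell p).
Proof.
apply: fin_bigcap_measurable => [|j _]; first exact: finite_finset.
by apply: measurable_preimage; apply: measurable_window.
Qed.

Let grid := pfamily (ord0 : 'I_m.+1) (fun j => j \in B) (fun _ => predT).

Definition grid_cover := (\big[setU/set0]_(p | p \in grid) cell p) `|`
   (\big[setU/set0]_(j | j \in B) (X j @^-1` ~` [set x | - eps < x < eps])).

Lemma measurable_grid_cover : measurable grid_cover.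
Proof.
apply: measurableU; apply: bigsetU_measurable => j _ //.
by apply/measurable_preimage/measurableC; exact: measurable_sym_itv.
Qed.

Let window_bound j :=
  if j == e then 2 * K / m.+1%:R else if j \in B then m.+1%:R^-1 else 1.

Let window_le p j : j \in E -> (P (X j @^-1` window p j) <= (window_bound j)%:E)%E.
Proof.
have mesh_eps : mesh / (2 * eps) = m.+1%:R^-1.
  by rewrite /mesh mulrAC divff ?mul1r // gt_eqF // mulr_gt0.
move=> jE; rewrite /window /window_bound; case: ifP => [/eqP je|_].
  apply: le_trans (uniform_sym_itv_le eps0 (X_unif jE) _) _.
    by have := mulr_ge0 K_ge0 (ltW mesh_gt0); lra.
  have -> : center p + K * mesh - (center p - K * mesh) = 2 * K * mesh by ring.
  by rewrite -[_ * mesh / _]mulrA mesh_eps.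
case: ifP => jB; last by rewrite preimage_setT probability_setT.
apply: le_trans (uniform_sym_itv_le eps0 (X_unif jE) _) _; first by rewrite lerDl ltW.
by rewrite lee_fin addrAC subrr add0r mesh_eps.
Qed.

Let prod_window_bound :
  \prod_(j in E) window_bound j = 2 * K / m.+1%:R * \prod_(j in B) m.+1%:R^-1.
Proof.
rewrite (bigD1 e) //= {1}/window_bound eqxx; congr (_ * _).
rewrite [RHS]big_mkcond [LHS]big_mkcond; apply: eq_bigr => j _ /=.
rewrite /window_bound; case: (eqVneq j e) => [->|je]; first by rewrite eE (negbTE eNB).
case jB: (j \in B); first by rewrite (fintype.subsetP BE _ jB).
by case: (j \in E).
Qed.

Lemma cell_le p : (P (cell p) <= (2 * K / m.+1%:R * \prod_(j in B) m.+1%:R^-1)%:E)%E.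
Proof.
rewrite -prod_window_bound /cell X_indep; last exact: measurable_window.
rewrite (eq_bigr _ (fun j _ => fineK_P (measurable_preimage _ (measurable_window p j)))).
rewrite prodEFin lee_fin; apply: ler_prod => j jE.
rewrite fine_ge0 ?measure_ge0 //= -lee_fin -fineK_P ?window_le //.
by apply: measurable_preimage; apply: measurable_window.
Qed.

Lemma grid_cover_le : (P grid_cover <= (2 * K / m.+1%:R)%:E)%E.
Proof.
have m_out j : measurable (X j @^-1` ~` [set x | - eps < x < eps]).
  by apply: measurable_preimage; apply: measurableC; exact: measurable_sym_itv.
apply: le_trans (measureU2 P (bigsetU_measurable _ _) (bigsetU_measurable _ _)) _.
- by move=> p _; exact: measurable_cell.
- by move=> j _; exact: m_out.
rewrite -[X in (_ <= X)%E]adde0; apply: leeD.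
  apply: le_trans (measure_bigsetU_le _ _ measurable_cell) _.
  apply: le_trans (_ : _ <= \sum_(p in grid)
    (2 * K / m.+1%:R * \prod_(j in B) m.+1%:R^-1)%:E)%E _.
    by apply: lee_sum => p _; exact: cell_le.
  rewrite sumEFin lee_fin -mulr_sumr.
  rewrite -(big_distr_big_dep _ _ _ (fun _ _ => m.+1%:R^-1)) big1 ?mulr1 // => j _.
  by rewrite sumr_const card_ord -[_ *+ _]mulr_natl mulfV // pnatr_eq0.
apply: le_trans (measure_bigsetU_le _ _ m_out) _.
by rewrite big1 // => j jB; apply/uniform_sym_out/X_unif/(fintype.subsetP BE).
Qed.

Let node_index x : 'I_m.+1 := inord (Num.truncn ((x + eps) / mesh)).

Let node_indexP x : - eps < x < eps ->
  node (node_index x) <= x <= node (node_index x) + mesh.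
Proof.
move=> /andP[x_gt x_lt]; set q := (x + eps) / mesh.
have qE : q * mesh = x + eps by rewrite /q divfK // gt_eqF.
have q0 : 0 <= q by rewrite divr_ge0 ?(ltW mesh_gt0) //; lra.
have q_lt : (Num.truncn q < m.+1)%N.
  rewrite truncn_lt_nat // -(ltr_pM2r mesh_gt0) qE /mesh mulrCA divff ?mulr1 //.
  lra.
have /andP[q_ge q_ltS] := truncn_itv q0.
rewrite /node_index /node inordK //.
have lo : (Num.truncn q)%:R * mesh <= q * mesh by rewrite ler_wpM2r // ltW.
have hi : q * mesh <= ((Num.truncn q)%:R + 1) * mesh.
  by rewrite ler_wpM2r ?natr1 // ltW.
by move: lo hi; rewrite qE mulrDl mul1r => lo hi; apply/andP; split; lra.
Qed.

Let mem_window_e (p : {ffun I -> 'I_m.+1}) o :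
  (forall b, b \in B -> node (p b) <= X b o <= node (p b) + mesh) ->
  X e o = \sum_(b in B) c b * X b o + k -> window p e (X e o).
Proof.
move=> near hyp; rewrite /window eqxx /= in_itv /=.
have : `|X e o - center p| <= K * mesh.
  rewrite hyp /center opprD addrACA subrr addr0 -sumrB /K mulr_suml.
  apply: le_trans (ler_norm_sum _ _ _) _; apply: ler_sum => b bB.
  rewrite -mulrBr normrM ler_wpM2l // ler_norml.
  have /andP[lo hi] := near b bB; have mesh0 := mesh_gt0.
  by apply/andP; split; lra.
by rewrite ler_norml => /andP[lo hi]; apply/andP; split; lra.
Qed.

Lemma hyperplane_sub_grid_cover :
  [set o | X e o = \sum_(b in B) c b * X b o + k] `<=` grid_cover.
Proof.
move=> o /= hyp.
have [[j jB out_j]|inside] := pselect (exists2 j, j \in B & ~ (- eps < X j o < eps)).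
  by right; rewrite (bigD1 j) //=; left.
have {}inside j : j \in B -> - eps < X j o < eps.
  by move=> jB; apply: contrapT => out_j; apply: inside; exists j.
pose p : {ffun I -> 'I_m.+1} :=
  [ffun j => if j \in B then node_index (X j o) else ord0].
have near b : b \in B -> node (p b) <= X b o <= node (p b) + mesh.
  by move=> bB; rewrite ffunE bB; exact/node_indexP/inside.
have p_grid : p \in grid.
  by apply/familyP => j; rewrite ffunE; case: ifP => jB; rewrite ?inE.
left; rewrite (bigD1 p) //=; left => j /= jE.
have [->|je] := eqVneq j e; first exact: mem_window_e.
rewrite /window (negbTE je); case: ifP => jB //=.
by rewrite in_itv /=; exact: near.
Qed.
End Grid.

Lemma hyperplane_negligible :
  P.-negligible [set o | X e o = \sum_(b in B) c b * X b o + k].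
Proof.
have mcover : measurable (\bigcap_m grid_cover m).
  by apply: bigcapT_measurable => m; exact: measurable_grid_cover.
exists (\bigcap_m grid_cover m); split => //; last first.
  by move=> o hyp m _; exact: hyperplane_sub_grid_cover.
rewrite fineK_P //; congr (_%:E); apply/le_anti/andP; split; last first.
  by rewrite fine_ge0 ?measure_ge0.
apply: le0_of_le_div_succ (2 * K) _ => m; rewrite -lee_fin -fineK_P //.
apply: le_trans (grid_cover_le m).
by apply: le_measure; rewrite ?inE //; [exact: measurable_grid_cover | move=> o; apply].
Qed.

End Hyperplane.

Section Sharpness.
Variables (R : realType) (V : finType) (Vmax : {set V}) (E : {set V * V})
  (lam : V * V -> R).

Definition edge_coef (b : V * V) (v : V) : R :=
  (v == b.1)%:R - lam b * (v == b.2)%:R.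

Lemma sum_edge_coef b (x : V -> R) :
  \sum_v edge_coef b v * x v = x b.1 - lam b * x b.2.
Proof.
have pick_sum (u : V) : \sum_v (v == u)%:R * x v = x u.
  by rewrite (bigD1 u) //= eqxx mul1r big1 ?addr0 // => v /negbTE ->; rewrite mul0r.
under eq_bigr do rewrite mulrBl -mulrA.
by rewrite sumrB pick_sum -mulr_sumr pick_sum.
Qed.

(* The left-hand sides of the equations of a basis have trivial common kernel,
   since adding a kernel vector to the basis valuation gives another solution. *)
Lemma is_basis_edge_span (w : V * V -> R) B e : is_basis E w lam B ->
  exists c : V * V -> R, forall x,
    x e.1 - lam e * x e.2 = \sum_(b in B) c b * (x b.1 - lam b * x b.2).
Proof.
move=> [_ [_ [[x0 x0B] uniqB]]].
have ker0 (z : V -> R) : (forall b, b \in B -> \sum_v edge_coef b v * z v = 0) ->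
    forall v, z v = 0.
  move=> zB v; have shifted : solves_eqs w lam B (fun u => x0 u + z u).
    by move=> b bB /=; have := zB b bB; rewrite sum_edge_coef x0B //; lra.
  by have := uniqB _ _ shifted x0B v; lra.
have [c cE] := linear_form_span (edge_coef e) ker0.
by exists c => x; rewrite -sum_edge_coef cE; under eq_bigr do rewrite sum_edge_coef.
Qed.

Lemma not_sharp_tight_edge (w : V * V -> R) : ~ sharp Vmax E w lam ->
  exists B e x, [/\ is_basis E w lam B, e \in E, e \notin B,
    solves_eqs w lam B x & x e.1 = w e + lam e * x e.2].
Proof.
move=> not_sharp; apply: contrapT => none; apply: not_sharp => x [B [Bbasis [xB _]]].
have [BE [cardB _]] := Bbasis.
set S := [set e in E | _].
have BS : B \subset S.
  apply/fintype.subsetP => b bB.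
  by rewrite inE (fintype.subsetP BE _ bB) /=; apply/eqP/xB.
have SB : S \subset B.
  apply/fintype.subsetP => e; rewrite inE => /andP[eE /eqP tight].
  by apply: contraT => eNB; exfalso; apply: none; exists B, e, x.
by apply/eqP; rewrite eqn_leq -cardB !subset_leq_card.
Qed.
End Sharpness.

Lemma ae_sharp_perturbed (R : realType) (V : finType) (Vmax : {set V})
    (E : {set V * V}) (w lam : V * V -> R) (eps : R) d (Omega : measurableType d)
    (P : probability Omega R) (X : V * V -> Omega -> R) :
  0 < eps -> (forall e, measurable_fun setT (X e)) -> mutually_independent P E X ->
  (forall e, e \in E -> uniform_sym P (X e) eps) ->
  {ae P, forall o, sharp Vmax E (fun e => w e + X e o) lam}.
Proof.
move=> eps0 mX X_indep X_unif.
pose W o e := w e + X e o.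
pose tight_at (B : {set V * V}) e : set Omega := [set o | exists x,
  [/\ is_basis E (W o) lam B, e \in E, e \notin B,
      solves_eqs (W o) lam B x & x e.1 = W o e + lam e * x e.2]].
have tight_negligible B e : P.-negligible (tight_at B e).
  case: (pselect (exists o, tight_at B e o)) => [[ot [_ [B0 eE eNB _ _]]] | none];
    last first.
    by apply: negligibleS (negligible_set0 P) => o tight; apply: none; exists o.
  have [c cE] := is_basis_edge_span e B0.
  apply: negligibleS (hyperplane_negligible eps0 mX X_indep X_unif c
    (\sum_(b in B) c b * w b - w e) (proj1 B0) eE eNB) => o [x [_ _ _ xB tight]] /=.
  have := cE x; rewrite tight /W addrK.
  have -> : \sum_(b in B) c b * (x b.1 - lam b * x b.2) =
      \sum_(b in B) (c b * w b + c b * X b o).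
    by apply: eq_bigr => b bB; rewrite (xB b bB) /W addrK mulrDr.
  by rewrite big_split /=; lra.
change (P.-negligible (~` [set o | sharp Vmax E (W o) lam])).
apply: (@negligibleS _ _ _ _
  (\big[setU/set0]_(Be : {set V * V} * (V * V)) tight_at Be.1 Be.2)).
  move=> o /not_sharp_tight_edge [B [e [x [Bbasis eE eNB xB tight]]]].
  by rewrite (bigD1 (B, e)) //=; left; exists x.
elim/big_ind: _ => [|A A'|[B e] _]; first exact: negligible_set0.
  exact: negligibleU.
exact: tight_negligible.
Qed.

Lemma lambda_star_max (R : realType) (V : finType) (E : {set V * V})
    (lam : V * V -> R) e0 :
  e0 \in E -> (forall e, e \in E -> 0 <= lam e /\ lam e < 1) ->
  lambda_star E lam < 1 /\ forall e, e \in E -> 0 <= lam e <= lambda_star E lam.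
Proof.
move=> e0E lam01.
have [m mE maxm] := @arg_maxP _ _ _ e0 (fun e => e \in E) lam e0E.
have {}maxm e : e \in E -> lam e <= lam m by exact: maxm.
have -> : lambda_star E lam = lam m.
  by apply: sup_eq_max; [exists m | move=> _ [e eE <-]; exact: maxm].
by split=> [|e eE]; [case: (lam01 m) | rewrite maxm // andbT; case: (lam01 e)].
Qed.

Theorem corollary4p7 (R : realType) (V : finType) (Vmax : {set V})
  (Ed : {set V * V}) (w lam : V * V -> R) (eps : R) :
  valid_game Ed lam ->
  (exists s, joint_strategy Ed s /\ ~ co_optimal Vmax Ed w lam s) ->
  0 < eps ->
  eps <= (1 - lambda_star Ed lam) / 3 * gap Vmax Ed w lam ->
  (forall delta : V * V -> R,
     (forall e, e \in Ed -> - eps < delta e < eps) ->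
     forall s, co_optimal Vmax Ed (fun e => w e + delta e) lam s ->
               co_optimal Vmax Ed w lam s) /\
  (forall (d : measure_display) (Omega : measurableType d)
          (P : probability Omega R) (X : V * V -> Omega -> R),
     (forall e, measurable_fun setT (X e)) ->
     mutually_independent P Ed X ->
     (forall e, e \in Ed -> uniform_sym P (X e) eps) ->
     {ae P, forall omega, sharp Vmax Ed (fun e => w e + X e omega) lam}).
Proof.
move=> [E_total lam01] [s0 [js0 not_coopt0]] eps0 eps_gap; split; last first.
  by move=> d Omega P X; exact: ae_sharp_perturbed.
have [v0 _|V0] := pickP (@predT V); last first.
  by exfalso; apply: not_coopt0; split => // v; have := V0 v.
have [lam_star1 lam_star_max] := lambda_star_max (js0 v0) lam01.
move=> delta small_delta.
apply: (co_optimal_perturbed lam_star_max lam_star1 E_total eps0 eps_gap) => e eE.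
by rewrite ltr_norml small_delta.
Qed.
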